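(* Let $n\ge 2$ be an integer. (i) If $n\ne 4,5$, then every polynomial $f\in\mathbb{Z}[x]$ of degree $n$ that is reducible in $\mathbb{Q}[x]$ satisfies $P(f)\le n+2$. (ii) There exists a polynomial $f\in\mathbb{Z}[x]$ of degree $n$, reducible in $\mathbb{Q}[x]$, with $P(f)\ge n+1$. (iii) If $n=4$ or $n=5$, then the maximum of $P(f)$ over all polynomials $f\in\mathbb{Z}[x]$ of degree $n$ that are reducible in $\mathbb{Q}[x]$ is exactly $8$.
   Context: For a polynomial $f$ with rational coefficients, $P(f)=\#\{m\in\mathbb{Z}: f(m)\text{ is prime}\}$. Here ''$f(m)$ is prime'' means that $|f(m)|$ is a prime number, so negative primes $-p$ are counted. A polynomial is reducible in $\mathbb{Q}[x]$ if it is a product of two nonconstant polynomials with rational coefficients. *)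

From mathcomp Require Import all_boot all_order all_algebra.
Set Implicit Arguments. Unset Strict Implicit. Unset Printing Implicit Defensive.
Import Order.TTheory GRing.Theory Num.Theory.
Local Open Scope ring_scope.

Definition prime_at (f : {poly int}) (m : int) : bool := prime `|f.[m]|%N.

(* P(f) <= k : every finite set of distinct integers m with f(m) prime has
   at most k elements (in particular the set is finite). *)
Definition P_le (f : {poly int}) (k : nat) : Prop :=
  forall s : seq int, uniq s -> all (prime_at f) s -> (size s <= k)%N.

Definition P_ge (f : {poly int}) (k : nat) : Prop :=
  exists s : seq int, [/\ uniq s, all (prime_at f) s & size s = k].

Definition reducibleQ (f : {poly int}) : Prop :=
  exists g h : {poly rat},
    [/\ (1 < size g)%N, (1 < size h)%N & map_poly (intr : int -> rat) f = g * h].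

From mathcomp Require Import all_boot all_order all_algebra all_field.
From mathcomp Require Import zify ring.
Set Implicit Arguments. Unset Strict Implicit. Unset Printing Implicit Defensive.
Import Order.TTheory GRing.Theory Num.Theory.
Local Open Scope ring_scope.

(* By Gauss's lemma f = g h with g, h in Z[x] of degrees d, e >= 1, and
   f(m) prime forces |g(m)| = 1 or |h(m)| = 1.  An integer polynomial of degree d takes
   each of the values 1 and -1 at most d times; if it takes both then, as a - b divides
   g(a) - g(b) = -+2, every point of one kind lies within distance 2 of every point of
   the other, which leaves room for at most 4 points.  Hence
   P(f) <= min(2d, max(d,4)) + min(2e, max(e,4)), which is at most n + 2 except for
   {d,e} = {1,2}, {2,2}, {2,3}, where it is 6, 8, 8.  For {d,e} = {1,2} with six prime
   values, the four points where the quadratic factor is -+1 are consecutive, so the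
   linear factor would be prime at four consecutive terms of a progression of difference
   -+1 or -+2, which parity or divisibility by 3 forbids.

   Let Bs be a set of integers of prime absolute value such that
   B = prod_(b in Bs) (x - b) satisfies B(1) = B(-1).  Pick a prime q = 1 + c B(1) (a
   prime divisor of Phi_M(a) not dividing M is 1 mod M); then f = x (1 + c B) is prime
   at Bs and at -+1.  Degrees 4 and 5 reach 8 with explicit polynomials. *)

(** * Values -+1 of integer polynomials *)

Lemma factor_uniq_roots (R : idomainType) (p : {poly R}) (s : seq R) :
  uniq s -> all (root p) s -> exists q, p = q * \prod_(a <- s) ('X - a%:P).
Proof.
elim: s p => [|a s IHs] p /=; first by exists p; rewrite big_nil mulr1.
case/andP=> nas us /andP[/factor_theorem[q ->] rs].
have rqs : all (root q) s.
  apply/allP => b bs; have /(allP rs) := bs.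
  by rewrite rootM root_XsubC (negbTE (memPn nas b bs)) orbF.
have [r ->] := IHs q us rqs; exists r.
by rewrite big_cons -mulrA [_ * ('X - _)]mulrC.
Qed.

Lemma horner_sub_prod_roots (R : idomainType) (g : {poly R}) (v b : R) (s : seq R) :
  uniq s -> all (fun a => g.[a] == v) s ->
  exists k, g.[b] - v = \prod_(a <- s) (b - a) * k.
Proof.
move=> us gs; have rs : all (root (g - v%:P)) s.
  by apply/allP => a /(allP gs) /eqP ga; rewrite /root !hornerE ga subrr.
have [q /(congr1 (horner^~ b))] := factor_uniq_roots us rs.
rewrite hornerM horner_prod !hornerE => ->; exists q.[b]; rewrite mulrC.
by congr (_ * _); apply: eq_bigr => a _; rewrite hornerXsubC.
Qed.

Lemma count_horner_eq_le (R : idomainType) (g : {poly R}) (v : R) (s : seq R) :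
  (1 < size g)%N -> uniq s -> (count (fun m => g.[m] == v) s <= (size g).-1)%N.
Proof.
move=> sg us; have gv0 : g - v%:P != 0.
  by apply: contraTneq sg => /eqP; rewrite subr_eq0 => /eqP ->; rewrite size_polyC ltnNge leq_b1.
have szgv : size (g - v%:P) = size g.
  by rewrite size_polyDl // size_polyN size_polyC (leq_ltn_trans (leq_b1 _) sg).
rewrite -size_filter -ltnS (ltn_predK sg) -szgv; apply: max_poly_roots => //.
- by apply/allP => m; rewrite mem_filter /root !hornerE => /andP[/eqP -> _]; rewrite subrr.
- exact: filter_uniq.
Qed.

Lemma absz_mul_eq2 (x k : int) : `|(x * k)%R|%N = 2%N -> `|x|%N = 1%N \/ `|x|%N = 2%N.
Proof.
rewrite abszM => h; have dvd2 : (`|x| %| 2)%N by rewrite -h dvdn_mulr.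
move: dvd2 (dvdn_leq (isT : (0 < 2)%N) dvd2); case: `|x|%N => [|[|[|m]]] //; by [left | right].
Qed.

Section ValueGapTwo.

Variables (g : {poly int}) (v w : int).
Hypothesis gap : `|w - v|%N = 2%N.

Lemma gap2_near a b : g.[a] = v -> g.[b] = w -> `|b - a|%N = 1%N \/ `|b - a|%N = 2%N.
Proof.
move=> ga gb; have [|k] := @horner_sub_prod_roots _ g v b [:: a] isT.
  by rewrite /= ga eqxx.
by rewrite gb big_seq1 => e; apply: (absz_mul_eq2 (k := k)); rewrite -e.
Qed.

(* b - 2 and b + 2 cannot both be v-points, as 2 * -2 does not divide w - v. *)
Lemma gap2_window (A : seq int) b : all (fun a => g.[a] == v) A -> g.[b] = w ->
  exists2 e : int, `|e|%N = 1%N & {subset A <= [:: b - 1; b + 1; b + e *+ 2]}.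
Proof.
move=> gA gb.
have near a : a \in A -> a = b - 1 \/ a = b + 1 \/ a = b - 2 \/ a = b + 2.
  by move=> /(allP gA) /eqP /gap2_near /(_ gb); lia.
have not_both : ~ (b - 2 \in A /\ b + 2 \in A).
  case=> lo hi; have uq : uniq [:: b - 2; b + 2] by rewrite /= inE; apply/eqP; lia.
  have gs : all (fun a => g.[a] == v) [:: b - 2; b + 2].
    by rewrite /= (eqP (allP gA _ lo)) (eqP (allP gA _ hi)) eqxx.
  have [k] := horner_sub_prod_roots b uq gs.
  rewrite gb !big_cons big_nil => e.
  have e4 : w - v = - (4 * k) by rewrite e; ring.
  by move: gap; rewrite e4 abszN abszM; lia.
have [lo|nlo] := boolP (b - 2 \in A).
- exists (-1) => // a aA; rewrite !inE.
  have : a != b + 2 by apply/eqP => eab; apply: not_both; rewrite -eab.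
  by move: (near a aA); lia.
- exists 1 => // a aA; rewrite !inE.
  have : a != b - 2 by apply: contraNneq nlo => <-.
  by move: (near a aA); lia.
Qed.

Lemma gap2_size_le3 (A : seq int) b : uniq A -> all (fun a => g.[a] == v) A -> g.[b] = w ->
  (size A <= 3)%N.
Proof.
move=> uA gA gb; have [e _ sub] := gap2_window gA gb.
exact: uniq_leq_size sub.
Qed.

Lemma gap2_sum (A : seq int) b : size A = 3%N -> uniq A ->
  all (fun a => g.[a] == v) A -> g.[b] = w ->
  exists2 e : int, `|e|%N = 1%N & \sum_(a <- A) a = b *+ 3 + e *+ 2.
Proof.
move=> sA uA gA gb; have [e eu sub] := gap2_window gA gb; exists e => //.
have szW : (3 <= size A)%N by rewrite sA.
have [_ eqAW] := uniq_min_size uA sub szW.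
have uW := leq_size_uniq uA sub szW.
rewrite (perm_big _ (uniq_perm uA uW eqAW)) !big_cons big_nil /=; ring.
Qed.

Lemma gap2_size_le1 (A B : seq int) : size A = 3%N -> uniq A -> uniq B ->
  all (fun a => g.[a] == v) A -> all (fun b => g.[b] == w) B -> (size B <= 1)%N.
Proof.
move=> sA uA uB gA.
case: B uB => [|b1 [|b2 B]] //=; rewrite inE => /andP[/norP[nb _] _].
case/and3P=> /eqP gb1 /eqP gb2 _.
have [e1 e1u s1] := gap2_sum sA uA gA gb1; have [e2 e2u s2] := gap2_sum sA uA gA gb2.
by move: nb; rewrite s1 in s2; lia.
Qed.

End ValueGapTwo.

Definition pm1_bound (d : nat) : nat := minn (2 * d) (maxn d 4).

Lemma count_abs1 (g : {poly int}) (s : seq int) :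
  count (fun m => `|g.[m]|%N == 1%N) s =
  addn (count (fun m => g.[m] == 1) s) (count (fun m => g.[m] == -1) s).
Proof.
rewrite -count_predUI -[LHS]addn0; congr (_ + _).
  by apply: eq_in_count => m _ /=; apply/idP/idP; lia.
by apply/esym/eqP; rewrite -leqn0 leqNgt -has_count; apply/hasP => -[m _ /= /andP[/eqP -> ]].
Qed.

Lemma count_abs1_le (g : {poly int}) (s : seq int) : (1 < size g)%N -> uniq s ->
  all (fun m => `|g.[m]|%N == 1%N) s -> (size s <= pm1_bound (size g).-1)%N.
Proof.
move=> sg us g1; rewrite /pm1_bound.
set A := filter (fun m => g.[m] == 1) s; set B := filter (fun m => g.[m] == -1) s.
have szs : size s = (size A + size B)%N.
  by rewrite !size_filter -count_abs1; apply/esym/eqP; rewrite -all_count.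
have leA : (size A <= (size g).-1)%N by rewrite size_filter count_horner_eq_le.
have leB : (size B <= (size g).-1)%N by rewrite size_filter count_horner_eq_le.
have [uA uB] : uniq A /\ uniq B by split; apply: filter_uniq.
have gA : all (fun m => g.[m] == 1) A := filter_all _ s.
have gB : all (fun m => g.[m] == -1) B := filter_all _ s.
have [A0 | [a aA]] : size A = 0%N \/ exists a, a \in A.
    by case: (A) => [|a ?]; [left | right; exists a; rewrite mem_head].
  by rewrite szs A0; lia.
have [B0 | [b bB]] : size B = 0%N \/ exists b, b \in B.
    by case: (B) => [|b ?]; [left | right; exists b; rewrite mem_head].
  by rewrite szs B0; lia.
have ga : g.[a] = 1 by apply/eqP; move/allP: gA; apply.
have gb : g.[b] = -1 by apply/eqP; move/allP: gB; apply.
have gapNP : `|((-1) - 1 : int)%R|%N = 2%N by [].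
have gapPN : `|(1 - (-1) : int)%R|%N = 2%N by [].
have := gap2_size_le3 gapNP uA gA gb; have := gap2_size_le3 gapPN uB gB ga.
have := fun h => gap2_size_le1 gapNP h uA uB gA gB.
have := fun h => gap2_size_le1 gapPN h uB uA gB gA.
rewrite szs; move: leA leB; move: (size A) (size B) => x y; lia.
Qed.

(** * Prime values of a product *)

Lemma prime_muln_eq1 (m n : nat) : prime (m * n) -> (m == 1)%N || (n == 1)%N.
Proof.
move=> pmn; have /primeP[_ /(_ m (dvdn_mulr n (dvdnn m)))] := pmn.
case/orP=> [-> // | /eqP e]; apply/orP; right.
have m0 : (0 < m)%N by move: (prime_gt0 pmn); rewrite muln_gt0 => /andP[].
by move/eqP: e; rewrite -{1}[m]muln1 eqn_pmul2l // eq_sym.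
Qed.

Lemma prime_at_mul (g h : {poly int}) m : prime_at (g * h) m ->
  (`|g.[m]|%N == 1%N) || (`|h.[m]|%N == 1%N).
Proof. by rewrite /prime_at hornerM abszM => /prime_muln_eq1. Qed.

Lemma prime_at_mul_unit (g h : {poly int}) m : prime_at (g * h) m -> `|h.[m]|%N = 1%N ->
  prime `|g.[m]|.
Proof. by move=> pm h1; move: pm; rewrite /prime_at hornerM abszM h1 muln1. Qed.

Lemma prime_values_cover (g h : {poly int}) (s : seq int) : all (prime_at (g * h)) s ->
  (size s <= count (fun m => `|g.[m]|%N == 1%N) s + count (fun m => `|h.[m]|%N == 1%N) s)%N.
Proof.
move=> ps; rewrite -count_predUI (leq_trans _ (leq_addr _ _)) //.
suff : all (predU (fun m => `|g.[m]|%N == 1%N) (fun m => `|h.[m]|%N == 1%N)) s.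
  by rewrite all_count => /eqP ->.
by apply: sub_all ps => m /prime_at_mul.
Qed.

Lemma P_le_mul (g h : {poly int}) : (1 < size g)%N -> (1 < size h)%N ->
  P_le (g * h) (pm1_bound (size g).-1 + pm1_bound (size h).-1).
Proof.
move=> sg sh s us /prime_values_cover; rewrite -!size_filter => /leq_trans; apply.
by apply: leq_add; apply: count_abs1_le (filter_uniq _ us) (filter_all _ _).
Qed.

Definition int_divisors2 : seq int := [:: 1; -1; 2; -2].

(* Relative to a1, the points a2, b1, b2 are y - f, y, z with y = b1 - a1, z = b2 - a1,
   f = b1 - a2; the finitely many cases are decided by evaluation. *)
Lemma consecutive4_check : all (fun y => all (fun z => all (fun f =>
    [&& z - (y - f) \in int_divisors2, y - f != 0 & y != z] ==>
    has (fun m => all (mem [:: 0; y - f; y; z]) [:: m; m + 1; m + 2; m + 3])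
      [:: -3; -2; -1; 0]) int_divisors2) int_divisors2) int_divisors2.
Proof. by []. Qed.

Lemma consecutive4 (a1 a2 b1 b2 : int) : a1 != a2 -> b1 != b2 ->
  b1 - a1 \in int_divisors2 -> b2 - a1 \in int_divisors2 ->
  b1 - a2 \in int_divisors2 -> b2 - a2 \in int_divisors2 ->
  exists t : int, {subset [:: t; t + 1; t + 2; t + 3] <= [:: a1; a2; b1; b2]}.
Proof.
move=> na nb d11 d21 d12 d22.
have /allP/(_ _ d11)/allP/(_ _ d21)/allP/(_ _ d12)/implyP := consecutive4_check.
have -> : b1 - a1 - (b1 - a2) = a2 - a1 by ring.
have -> : b2 - a1 - (a2 - a1) = b2 - a2 by ring.
rewrite d22 subr_eq0 eq_sym na (inj_eq (subIr a1)) nb => /(_ isT) /hasP[m _ /allP sub].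
exists (a1 + m) => x; rewrite !inE => /or4P[] /eqP ->;
  [move: (sub m) | move: (sub (m + 1)) | move: (sub (m + 2)) | move: (sub (m + 3))];
  rewrite !inE eqxx ?orbT => /(_ isT); clear d11 d21 d12 d22 sub; lia.
Qed.

Lemma pm1_pairs_consecutive (h : {poly int}) (a1 a2 b1 b2 : int) : a1 != a2 -> b1 != b2 ->
  h.[a1] = 1 -> h.[a2] = 1 -> h.[b1] = -1 -> h.[b2] = -1 ->
  exists t : int, {subset [:: t; t + 1; t + 2; t + 3] <= [:: a1; a2; b1; b2]}.
Proof.
move=> na nb ha1 ha2 hb1 hb2.
have near a b : h.[a] = 1 -> h.[b] = -1 -> b - a \in int_divisors2.
  by move=> ha hb; have := @gap2_near h 1 (-1) erefl a b ha hb; rewrite !inE; lia.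
exact: consecutive4 na nb (near _ _ ha1 hb1) (near _ _ ha1 hb2)
                          (near _ _ ha2 hb1) (near _ _ ha2 hb2).
Qed.

Lemma prime_absz_mul (p : nat) (y k : int) : prime p -> prime `|y| -> y = p%:Z * k ->
  `|y|%N = p.
Proof.
move=> pp py yk; have : (p %| `|y|)%N by rewrite yk abszM absz_nat dvdn_mulr.
by rewrite dvdn_prime2 // => /eqP.
Qed.

Lemma ap4_not_all_prime (Y u : int) : `|u|%N = 1%N \/ `|u|%N = 2%N ->
  ~ [/\ prime `|Y|, prime `|Y + u|, prime `|Y + 2 * u| & prime `|Y + 3 * u|].
Proof.
have two y k : prime `|y| -> y = 2 * k -> `|y|%N = 2%N := @prime_absz_mul 2 y k isT.
have three y k : prime `|y| -> y = 3 * k -> `|y|%N = 3%N := @prime_absz_mul 3 y k isT.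
have not1 y : prime `|y| -> `|y|%N <> 1%N by move=> + e; rewrite e.
move=> hu [p0 p1 p2 p3].
have [q Yq] : exists q : int, Y = 2 * q \/ Y = 2 * q + 1 by exists (Y %/ 2)%Z; lia.
have [k Yk] : exists k : int, Y = 3 * k \/ Y = 3 * k + 1 \/ Y = 3 * k + 2.
  by exists (Y %/ 3)%Z; lia.
have : u = 1 \/ u = -1 \/ u = 2 \/ u = -2 by lia.
case=> [|[|[|]]] eu; subst u.
- by case: Yq => Yq; [ move: (two _ q p0) (two _ (q + 1) p2)
                     | move: (two _ (q + 1) p1) (two _ (q + 2) p3)]; lia.
- by case: Yq => Yq; [ move: (two _ q p0) (two _ (q - 1) p2)
                     | move: (two _ q p1) (two _ (q - 1) p3)]; lia.
- by case: Yk => [Yk|[Yk|Yk]]; [move: (three _ k p0) (three _ (k + 2) p3) (not1 _ p1)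
                 | move: (three _ (k + 1) p1) (not1 _ p0) (not1 _ p2)
                 | move: (three _ (k + 2) p2) (not1 _ p0) (not1 _ p3)]; lia.
- by case: Yk => [Yk|[Yk|Yk]]; [move: (three _ k p0) (three _ (k - 2) p3) (not1 _ p1)
                 | move: (three _ (k - 1) p2) (not1 _ p0) (not1 _ p3)
                 | move: (three _ k p1) (not1 _ p0) (not1 _ p2)]; lia.
Qed.

Lemma horner_size2 (R : nzRingType) (g : {poly R}) x : size g = 2%N -> g.[x] = g`_0 + g`_1 * x.
Proof.
by move=> sg; rewrite horner_coef sg !big_ord_recl big_ord0 /= expr0 expr1 mulr1 addr0.
Qed.

Lemma linear_pm1_slope (g : {poly int}) m1 m2 : size g = 2%N -> m1 != m2 ->
  `|g.[m1]|%N = 1%N -> `|g.[m2]|%N = 1%N -> `|(g`_1)%R|%N = 1%N \/ `|(g`_1)%R|%N = 2%N.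
Proof.
move=> sg n12 g1 g2.
have : lead_coef g != 0 by rewrite lead_coef_eq0 -size_poly_gt0 sg.
rewrite lead_coefE sg => u0.
have e : g.[m1] - g.[m2] = g`_1 * (m1 - m2) by rewrite !horner_size2 //; ring.
have : g.[m1] - g.[m2] != 0 by rewrite e mulf_neq0 // subr_eq0.
by move=> ne; apply: (absz_mul_eq2 (k := m1 - m2)); rewrite -e; move: ne; lia.
Qed.

Lemma P_le_lin_mul_quad (g h : {poly int}) : size g = 2%N -> size h = 3%N -> P_le (g * h) 5.
Proof.
move=> sg sh s us ps; rewrite leqNgt; apply/negP => s6.
set G := [seq m <- s | `|g.[m]|%N == 1%N].
set A := [seq m <- s | h.[m] == 1]; set B := [seq m <- s | h.[m] == -1].
have := prime_values_cover ps; rewrite (count_abs1 h) -!size_filter -/G -/A -/B => cover.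
have leG : (size G <= 2)%N.
  have sg1 : (1 < size g)%N by rewrite sg.
  by have := count_abs1_le sg1 (filter_uniq _ us) (filter_all _ s); rewrite sg.
have [leA leB] : (size A <= 2)%N /\ (size B <= 2)%N.
  by rewrite !size_filter; split; apply: leq_trans (count_horner_eq_le _ _ us) _; rewrite sh.
have [sG sA sB] : [/\ size G = 2%N, size A = 2%N & size B = 2%N].
  by split; lia.
have mG x : x \in G -> `|g.[x]|%N = 1%N by rewrite mem_filter => /andP[/eqP].
have mA x : x \in A -> x \in s /\ h.[x] = 1 by rewrite mem_filter => /andP[/eqP].
have mB x : x \in B -> x \in s /\ h.[x] = -1 by rewrite mem_filter => /andP[/eqP].
have [uG uA uB] : [/\ uniq G, uniq A & uniq B] by split; apply: filter_uniq.
clear cover leG leA leB s6; clearbody G A B.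
case: G sG uG mG => [|m1 [|m2 []]] // _; rewrite /= inE andbT => n12 mG.
case: A sA uA mA => [|a1 [|a2 []]] // _; rewrite /= inE andbT => na mA.
case: B sB uB mB => [|b1 [|b2 []]] // _; rewrite /= inE andbT => nb mB.
have in2 (x y : int) : y \in [:: x; y] by rewrite !inE eqxx orbT.
have [[a1s ha1] [a2s ha2]] := (mA a1 (mem_head _ _), mA a2 (in2 a1 a2)).
have [[b1s hb1] [b2s hb2]] := (mB b1 (mem_head _ _), mB b2 (in2 b1 b2)).
have [t sub] := pm1_pairs_consecutive na nb ha1 ha2 hb1 hb2.
have pg x : x \in [:: t; t + 1; t + 2; t + 3] -> prime `|g.[x]|.
  move/sub; rewrite !inE => /or4P[] /eqP ->; apply: (@prime_at_mul_unit g h);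
    rewrite ?ha1 ?ha2 ?hb1 ?hb2 //; by apply: (allP ps).
have slope := linear_pm1_slope sg n12 (mG m1 (mem_head _ _)) (mG m2 (in2 m1 m2)).
have eg j : g.[t + j] = g.[t] + j * g`_1 by rewrite !horner_size2 //; ring.
apply: (ap4_not_all_prime (Y := g.[t]) slope); split.
- by apply: pg; rewrite mem_head.
- by move: (pg (t + 1)); rewrite eg mul1r !inE eqxx orbT; apply.
- by move: (pg (t + 2)); rewrite eg !inE eqxx !orbT; apply.
- by move: (pg (t + 3)); rewrite eg !inE eqxx !orbT; apply.
Qed.

Lemma P_le_leq (f : {poly int}) (k k' : nat) : (k <= k')%N -> P_le f k -> P_le f k'.
Proof. by move=> kk' Pk s us ps; apply: leq_trans (Pk s us ps) kk'. Qed.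

Lemma reducibleQ_int_factor (f : {poly int}) : reducibleQ f ->
  exists g h : {poly int}, [/\ f = g * h, (1 < size g)%N & (1 < size h)%N].
Proof.
case=> g' [h' [sg' sh' e]].
have [g'0 h'0] : g' != 0 /\ h' != 0 by rewrite -!size_poly_gt0; split; apply: ltnW.
have : g' %| map_poly intr f by rewrite e dvdp_mulr.
case/dvdpP_rat_int => g [a a0 hg] [h hh].
have sg : size g = size g' by rewrite hg size_scale // size_rat_int_poly.
have h0 : h != 0.
  by apply: contra_eq_neq e => h0; rewrite hh h0 mulr0 rmorph0 eq_sym mulf_neq0.
exists g, h; split; rewrite ?sg //.
have := size_rat_int_poly f; rewrite e hh !size_mul // ?sg; last by rewrite -size_poly_gt0 sg ltnW.
by move: sg' sh'; move: (size g') (size h') (size h) => x y z; lia.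
Qed.

Lemma size_mul_nonconst (g h : {poly int}) : (1 < size g)%N -> (1 < size h)%N ->
  size (g * h) = (size g + size h).-1.
Proof. by move=> sg sh; rewrite size_mul // -size_poly_gt0 ltnW. Qed.

Lemma P_le_reducible (f : {poly int}) (n : nat) : size f = n.+1 -> reducibleQ f ->
  exists d e : nat, [/\ (0 < d)%N, (0 < e)%N, (d + e)%N = n
                      & P_le f (pm1_bound d + pm1_bound e)].
Proof.
move=> sf /reducibleQ_int_factor[g [h [ef sg sh]]]; subst f.
rewrite size_mul_nonconst // in sf.
exists (size g).-1, (size h).-1; split; [lia | lia | | exact: P_le_mul].
by move: sf sg sh; lia.
Qed.

Lemma P_le_reducible_cubic (f : {poly int}) : size f = 4%N -> reducibleQ f -> P_le f 5.
Proof.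
move=> sf /reducibleQ_int_factor[g [h [ef sg sh]]]; subst f.
rewrite size_mul_nonconst // in sf.
have [sg2|sg3] : size g = 2%N \/ size g = 3%N.
  by move: sf sg sh; lia.
- by apply: P_le_lin_mul_quad; move: sf sh; rewrite sg2; lia.
- by rewrite mulrC; apply: P_le_lin_mul_quad; move: sf sh; rewrite sg3; lia.
Qed.

(** * Primes congruent to 1 modulo M *)

Lemma Cyclotomic_dvd_Xn_sub1 (M : nat) : (0 < M)%N ->
  exists R : {poly int}, 'X^M - 1 = 'Phi_M * R.
Proof.
move=> M0; rewrite -(prod_Cyclotomic M0) (bigD1_seq M) ?divisors_uniq //; first by eexists.
by rewrite -dvdn_divisors.
Qed.

Lemma Cyclotomic2_dvd_Xn_sub1 (M d : nat) : (0 < M)%N -> (d %| M)%N -> d != M ->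
  exists S : {poly int}, 'X^M - 1 = 'Phi_M * ('Phi_d * S).
Proof.
move=> M0 dM ndM; rewrite -(prod_Cyclotomic M0) (bigD1_seq M) ?divisors_uniq //;
  last by rewrite -dvdn_divisors.
rewrite -big_filter (bigD1_seq d) ?filter_uniq ?divisors_uniq //; first by eexists.
by rewrite mem_filter ndM -dvdn_divisors.
Qed.

Lemma Fp_intr_eq0 (p : nat) (x : int) : prime p -> ((x%:~R : 'F_p) == 0) = (p %| `|x|)%N.
Proof.
move=> pp; rewrite [x]intEsign rmorphM /= rmorph_sign mulf_eq0 signr_eq0 /=.
rewrite abszM; have -> : `|(-1) ^+ (x < 0)%R|%N = 1%N by case: (x < 0)%R.
by rewrite mul1n absz_nat (dvdn_pcharf (pchar_Fp pp)) pmulrn.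
Qed.

Section FpCyclotomicRoot.

Variables (p M : nat) (alpha : 'F_p).
Hypotheses (M0 : (0 < M)%N) (Mp : (M%:R : 'F_p) != 0).
Hypothesis root_alpha : root (map_poly intr 'Phi_M) alpha.

Let map_Xn_sub1 n : map_poly intr ('X^n - 1 : {poly int}) = ('X^n - 1 : {poly 'F_p}).
Proof. by rewrite rmorphB rmorph1 rmorphXn /= map_polyX. Qed.

Lemma Fp_Cyclotomic_root_expr_eq1 : alpha ^+ M = 1.
Proof.
have [R hR] := Cyclotomic_dvd_Xn_sub1 M0; apply/eqP; rewrite -subr_eq0.
have := congr1 (fun q => (map_poly intr q).[alpha]) hR.
by rewrite /= map_Xn_sub1 rmorphM hornerM (eqP root_alpha) mul0r !hornerE => ->.
Qed.

Lemma Fp_Cyclotomic_root_prim : M.-primitive_root alpha.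
Proof.
have [m pm mM] := prim_order_exists M0 Fp_Cyclotomic_root_expr_eq1.
have [<- // | neM] := eqVneq m M; exfalso.
have m0 : (0 < m)%N := prim_order_gt0 pm.
have : (\prod_(d <- divisors m) (map_poly intr 'Phi_d : {poly 'F_p})).[alpha] == 0.
  by rewrite -rmorph_prod prod_Cyclotomic //= map_Xn_sub1 !hornerE prim_expr_order // subrr.
rewrite horner_prod prodf_seq_eq0 => /hasP[d dm /= rd].
have dm' : (d %| m)%N by rewrite dvdn_divisors.
have dM : (d %| M)%N := dvdn_trans dm' mM.
have dneM : d != M.
  by apply: contra_neq neM => edM; apply/eqP; rewrite eqn_dvd mM -edM dm'.
have [S hS] := Cyclotomic2_dvd_Xn_sub1 M0 dM dneM.
have : ('X - alpha%:P) ^+ 2 %| ('X^M - 1 : {poly 'F_p}).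
  rewrite -map_Xn_sub1 hS !rmorphM /= mulrA expr2; apply: dvdp_mulr.
  by apply: dvdp_mul; rewrite dvdp_XsubCl.
by rewrite separable_nosquare ?size_XsubC // separable_Xn_sub_1.
Qed.

End FpCyclotomicRoot.

Lemma Fp_prim_root_dvd_pred (p M : nat) (alpha : 'F_p) : prime p ->
  M.-primitive_root alpha -> (M %| p.-1)%N.
Proof.
move=> pp prim; have M0 := prim_order_gt0 prim.
have alpha0 : alpha != 0.
  by apply: contra_eq_neq (prim_expr_order prim) => ->; rewrite expr0n gtn_eqF // eq_sym oner_eq0.
rewrite (prim_order_dvd prim); apply/eqP/(mulfI alpha0).
by rewrite -exprS prednK ?prime_gt0 // mulr1 -{2}(expf_card alpha) card_Fp.
Qed.

Lemma Cyclotomic_nonunit_value (M : nat) : (0 < M)%N ->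
  exists k : nat, `|('Phi_M).[(k.+2 * M)%N%:Z]|%N != 1%N.
Proof.
move=> M0; pose Q : {poly int} := ('Phi_M - 1) * ('Phi_M + 1).
have szPhi : (2 <= size 'Phi_M)%N by rewrite size_Cyclotomic ltnS totient_gt0.
have Q0 : Q != 0.
  rewrite mulf_neq0 //; apply: contraTneq szPhi => /eqP.
    by rewrite subr_eq0 => /eqP ->; rewrite size_poly1.
  by rewrite addr_eq0 => /eqP ->; rewrite size_polyN size_poly1.
have : ~~ all (root Q) [seq (k.+2 * M)%N%:Z | k <- iota 0 (size Q)].
  apply: contra Q0 => allr; apply/eqP/(roots_geq_poly_eq0 allr); last by rewrite size_map size_iota.
  by rewrite map_inj_uniq ?iota_uniq // => i j /eqP; rewrite eqz_nat eqn_pmul2r // => /eqP[].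
rewrite -has_predC => /hasP[_ /mapP[k _ ->]] /= nroot; exists k.
move: nroot; rewrite rootM /root !hornerE negb_or subr_eq0 addr_eq0.
by move: ('Phi_M).[_] => v; lia.
Qed.

Lemma prime_cong1_exists (M : nat) : (0 < M)%N -> exists2 p, prime p & (M %| p.-1)%N.
Proof.
move=> M0; have [k nunit] := Cyclotomic_nonunit_value M0.
set a : int := (k.+2 * M)%N%:Z in nunit *; set v := ('Phi_M).[a] in nunit *.
have [R hR] := Cyclotomic_dvd_Xn_sub1 M0.
have av : a ^+ M - 1 = v * R.[a] by rewrite /v -hornerM -hR !hornerE.
have v0 : v != 0.
  apply: contra_eq_neq av => ->; rewrite mul0r subr_eq0 pexpr_eq1 // /a; lia.
have N1 : (1 < `|v|)%N by rewrite ltn_neqAle eq_sym nunit absz_gt0.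
have pp := pdiv_prime N1; set p := pdiv `|v| in pp.
pose alpha : 'F_p := a%:~R.
have root_alpha : root (map_poly intr 'Phi_M) alpha.
  by rewrite /root horner_map /= Fp_intr_eq0 // pdiv_dvd.
have Mp : (M%:R : 'F_p) != 0.
  apply: contra_eq_neq (Fp_Cyclotomic_root_expr_eq1 M0 root_alpha) => Mp0.
  by rewrite /alpha /a -pmulrn natrM Mp0 mulr0 expr0n gtn_eqF // eq_sym oner_eq0.
by exists p => //; exact: Fp_prim_root_dvd_pred pp (Fp_Cyclotomic_root_prim M0 Mp root_alpha).
Qed.

(** * Reducible polynomials with many prime values *)

Lemma reducibleQ_mul (g h : {poly int}) : (1 < size g)%N -> (1 < size h)%N ->
  reducibleQ (g * h).
Proof.
move=> sg sh; exists (map_poly intr g), (map_poly intr h).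
by rewrite rmorphM !size_map_inj_poly //; apply: intr_inj.
Qed.

Lemma P_ge_of_prime_roots (Bs : seq int) : uniq Bs -> all (fun b => prime `|b|) Bs ->
  (0 < size Bs)%N ->
  (\prod_(b <- Bs) ('X - b%:P)).[1] = (\prod_(b <- Bs) ('X - b%:P)).[-1] ->
  exists f : {poly int}, [/\ size f = (size Bs).+2, reducibleQ f & P_ge f (size Bs).+2].
Proof.
set B := \prod_(b <- Bs) _ => uB pB sB eB.
have nB1 x : x \in Bs -> `|x|%N != 1%N by move/(allP pB) => /prime_gt1; lia.
have B1 : B.[1] != 0.
  rewrite /B horner_prod prodf_seq_neq0; apply/allP => b bB /=.
  by rewrite hornerXsubC subr_eq0; apply: contraNneq (nB1 b bB) => <-.
have [q pq dq] : exists2 q, prime q & (`|B.[1]| %| q.-1)%N.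
  by apply: prime_cong1_exists; rewrite absz_gt0.
have [c hc] : exists c : int, q%:Z - 1 = c * B.[1].
  apply/dvdzP; have -> : q%:Z - 1 = (q.-1)%:Z by have := prime_gt1 pq; lia.
  exact: dq.
have c0 : c != 0 by apply: contra_eq_neq hc => ->; rewrite mul0r; have := prime_gt1 pq; lia.
pose h := 1 + c *: B.
have szB : size B = (size Bs).+1 by rewrite size_prod_XsubC.
have szh : size h = (size Bs).+1.
  by rewrite /h addrC size_polyDl size_scale // szB size_poly1 ltnS.
have hb b : b \in Bs -> h.[b] = 1.
  by move=> bB; rewrite /h !hornerE (eqP (_ : root B b)) ?root_prod_XsubC // mulr0 addr0.
have h1 : h.[1] = q%:Z by rewrite /h !hornerE -hc addrC subrK.
have hm1 : h.[-1] = q%:Z by rewrite /h !hornerE -eB -hc addrC subrK.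
exists (h * 'X); split.
- by rewrite size_mulX -?size_poly_gt0 szh.
- by apply: reducibleQ_mul; rewrite ?szh ?size_polyX.
- exists [:: 1, -1 & Bs]; split => //=.
  + rewrite !inE uB andbT negb_or.
    by apply/andP; split; [apply/andP; split |]; try apply/negP => /nB1.
  + rewrite /prime_at !hornerM !hornerX h1 hm1 mulr1 mulrN1 abszN absz_nat pq /=.
    by apply/allP => b bB; rewrite hornerM hornerX hb // mul1r; apply: (allP pB).
Qed.

Lemma P_ge_Poly_mul (s t ms : seq int) : (1 < size s)%N -> (1 < size t)%N ->
  last 0 s != 0 -> last 0 t != 0 -> uniq ms ->
  all (fun m => prime `|(Poly s).[m] * (Poly t).[m]|) ms ->
  [/\ size (Poly s * Poly t) = (size s + size t).-1, reducibleQ (Poly s * Poly t)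
    & P_ge (Poly s * Poly t) (size ms)].
Proof.
move=> ss st ls lt ums pms.
have [Ps Pt] : size (Poly s) = size s /\ size (Poly t) = size t by rewrite (PolyK ls) (PolyK lt).
rewrite -Ps -Pt in ss st *; split.
- by rewrite size_mul // -size_poly_gt0 ltnW.
- exact: reducibleQ_mul.
by exists ms; split => //; apply/allP => m /(allP pms); rewrite /prime_at hornerM.
Qed.

Lemma quadratic_example : exists f : {poly int}, [/\ size f = 3%N, reducibleQ f & P_ge f 3].
Proof.
exists (Poly [:: 0; 1] * Poly [:: 4; 1]).
by apply: (P_ge_Poly_mul (ms := [:: 1; -1; -3])); rewrite //= !horner_cons !hornerC.
Qed.

Lemma quartic_example : exists f : {poly int}, [/\ size f = 5%N, reducibleQ f & P_ge f 8].
Proof.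
exists (Poly [:: 1; -3; 1] * Poly [:: 29; -11; 1]).
by apply: (P_ge_Poly_mul (ms := [:: 0; 1; 2; 3; 4; 5; 6; 7])); rewrite //= !horner_cons !hornerC.
Qed.

Lemma quintic_example : exists f : {poly int}, [/\ size f = 6%N, reducibleQ f & P_ge f 8].
Proof.
exists (Poly [:: -1; -2; 1; 1] * Poly [:: 11; -7; 1]).
by apply: (P_ge_Poly_mul (ms := [:: -2; -1; 0; 1; 2; 3; 4; 5])); rewrite //= !horner_cons !hornerC.
Qed.

Fixpoint primes_above (k m : nat) : seq nat :=
  if k is k'.+1 then let p := s2val (prime_above m) in p :: primes_above k' p else [::].

Lemma primes_above_spec (k m : nat) :
  [/\ size (primes_above k m) = k, uniq (primes_above k m), all prime (primes_above k m)
    & all (fun p => m < p)%N (primes_above k m)].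
Proof.
elim: k m => [|k IHk] m //=; case: (prime_above m) => p mp pp /=.
have [-> u a g] := IHk p; rewrite pp a mp u andbT /=; split=> //.
- by apply/negP => pin; have := allP g p pin; rewrite ltnn.
- by apply: sub_all g => q; apply: ltn_trans.
Qed.

Fixpoint pm_seq (ps : seq nat) : seq int :=
  if ps is p :: ps' then p%:Z :: - p%:Z :: pm_seq ps' else [::].

Lemma size_pm_seq (ps : seq nat) : size (pm_seq ps) = (2 * size ps)%N.
Proof. by elim: ps => //= p ps ->; lia. Qed.

Lemma mem_pm_seq (x : int) (ps : seq nat) : (x \in pm_seq ps) = (`|x|%N \in ps).
Proof.
by elim: ps => //= p ps IHps; rewrite !inE IHps orbA; congr (_ || _); apply/idP/idP; lia.
Qed.

Lemma pm_seq_uniq (ps : seq nat) : uniq ps -> all (fun p => 0 < p)%N ps -> uniq (pm_seq ps).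
Proof.
elim: ps => //= p ps IHps /andP[nps ups] /andP[p0 aps]; rewrite IHps // andbT !inE !mem_pm_seq.
by rewrite abszN absz_nat (negbTE nps) !orbF; lia.
Qed.

Lemma horner_prod_pm_seq (ps : seq nat) :
  (\prod_(b <- pm_seq ps) ('X - b%:P)).[1] = (\prod_(b <- pm_seq ps) ('X - b%:P)).[-1] :> int.
Proof.
elim: ps => [|p ps IHps] /=; first by rewrite big_nil !hornerC.
by rewrite !big_cons !hornerM IHps !hornerXsubC !mulrA; congr (_ * _); ring.
Qed.

Lemma P_ge_with_sym_primes (Bs0 : seq int) (k : nat) : uniq Bs0 ->
  all (fun b => prime `|b| && (`|b| <= 5)%N) Bs0 ->
  (\prod_(b <- Bs0) ('X - b%:P)).[1] = (\prod_(b <- Bs0) ('X - b%:P)).[-1] :> int ->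
  (0 < size Bs0 + k)%N ->
  exists f : {poly int}, [/\ size f = (size Bs0 + 2 * k).+2, reducibleQ f
                            & P_ge f (size Bs0 + 2 * k).+2].
Proof.
move=> u0 p0 e0 sz; have [sk uk pk gk] := primes_above_spec k 5.
rewrite -sk -size_pm_seq -size_cat; apply: P_ge_of_prime_roots.
- rewrite cat_uniq u0 pm_seq_uniq ?andbT //=; last by apply: sub_all gk => p; apply: leq_trans.
  apply/hasP => -[x]; rewrite mem_pm_seq => /(allP gk) x5 /(allP p0) /andP[_]; lia.
- rewrite all_cat; apply/andP; split; first by apply: sub_all p0 => b /andP[].
  by apply/allP => x; rewrite mem_pm_seq; apply: (allP pk).
- by rewrite size_cat size_pm_seq sk; lia.
- by rewrite big_cat /= !hornerM e0 horner_prod_pm_seq.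
Qed.

(* Pairs -+p give B(1) = B(-1); so does {2, -3, -5}, of odd size (both values are -24). *)
Lemma P_ge_reducible (n : nat) : (2 <= n)%N ->
  exists f : {poly int}, [/\ size f = n.+1, reducibleQ f & P_ge f n.+1].
Proof.
move=> n2; have [-> | n3] := eqVneq n 2; first exact: quadratic_example.
have hn := odd_double_half n; rewrite -muln2 mulnC in hn.
have [odd_n | even_n] := boolP (odd n).
- have e0 : (\prod_(b <- [::]) ('X - b%:P)).[1] = (\prod_(b <- [::]) ('X - b%:P)).[-1] :> int.
    by rewrite big_nil !hornerC.
  have sz : (0 < size ([::] : seq int) + n./2)%N by move: hn n2; rewrite odd_n; lia.
  have [f fP] := @P_ge_with_sym_primes [::] n./2 isT isT e0 sz.
  by exists f; rewrite -hn odd_n.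
- have e0 : (\prod_(b <- [:: 2; -3; -5]) ('X - b%:P)).[1] =
            (\prod_(b <- [:: 2; -3; -5]) ('X - b%:P)).[-1] :> int.
    by rewrite !big_cons big_nil !hornerE.
  have [f fP] := @P_ge_with_sym_primes [:: 2; -3; -5] (n./2 - 2) isT isT e0 isT.
  have -> : n.+1 = (3 + 2 * (n./2 - 2)).+2 by move: hn n2 n3; rewrite (negbTE even_n); lia.
  by exists f.
Qed.

Theorem theorem1 (n : nat) (hn : (2 <= n)%N) :
  [/\ (n <> 4%N /\ n <> 5%N ->
        forall f : {poly int}, size f = n.+1 -> reducibleQ f -> P_le f (n + 2)),
      (exists f : {poly int}, [/\ size f = n.+1, reducibleQ f & P_ge f n.+1])
    & (n = 4%N \/ n = 5%N ->
        (forall f : {poly int}, size f = n.+1 -> reducibleQ f -> P_le f 8)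
        /\ (exists f : {poly int}, [/\ size f = n.+1, reducibleQ f & P_ge f 8]))].
Proof.
have bound k : (n = 3%N -> (5 <= k)%N) ->
    (forall d e : nat, n <> 3%N -> (0 < d)%N -> (0 < e)%N -> (d + e)%N = n ->
       (pm1_bound d + pm1_bound e <= k)%N) ->
    forall f : {poly int}, size f = n.+1 -> reducibleQ f -> P_le f k.
  move=> k3 kde f sf rf; have [n3 | n3] := eqVneq n 3.
    by apply: P_le_leq (k3 n3) (P_le_reducible_cubic _ rf); rewrite sf n3.
  have [d [e [d0 e0 den Pf]]] := P_le_reducible sf rf.
  by apply: P_le_leq Pf; apply: kde => //; apply/eqP.
split.
- by move=> [n4 n5]; apply: bound => [|d e]; rewrite /pm1_bound; lia.
- exact: P_ge_reducible.
- move=> n45; split.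
    by apply: bound => [|d e]; rewrite /pm1_bound; lia.
  by case: n45 => ->; [exact: quartic_example | exact: quintic_example].
Qed.
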